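(* Let $V$ be a set of propositional variables and let $\mu$ be a function assigning to every definable model set $\Sigma\subseteq\Pi V$ a subset $\mu(\Sigma)\subseteq\Sigma$; define $T\mathrel{|\!\sim}\psi$ iff $\mu(M(T))\subseteq M(\psi)$. Say that $\mathrel{|\!\sim}$ has interpolation iff for all definable $\Sigma,\Sigma'\subseteq\Pi V$ with $\mu(\Sigma)\subseteq\Sigma'$ there is a definable $\Sigma''$ with $\mu(\Sigma)\subseteq\Sigma''\subseteq\Sigma'$ and $R(\Sigma'')\subseteq R(\Sigma)\cap R(\Sigma')$. (a) If $V$ is finite, then $\mathrel{|\!\sim}$ has interpolation iff $I(\Sigma)\subseteq I(\mu(\Sigma))$ for all $\Sigma\subseteq\Pi V$. (b) If $V$ is infinite and $\mu(\Sigma)$ is definable whenever $\Sigma$ is definable, then $\mathrel{|\!\sim}$ has interpolation iff $I(\Sigma)\subseteq I(\mu(\Sigma))$ for all definable $\Sigma\subseteq\Pi V$.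
   Context: Classical propositional logic: $\Pi V$ is the set of all assignments $V\to\{\mathrm{TRUE},\mathrm{FALSE}\}$ (models), $M(T)$ the set of models of a theory $T$, and a set of models is definable if it equals $M(T)$ for some theory $T$ (in a finite language every set of models is definable). For $\Sigma\subseteq\Pi V$, a variable $p$ is irrelevant for $\Sigma$ if changing the value of $p$ in any element of $\Sigma$ yields again an element of $\Sigma$; $I(\Sigma)$ is the set of irrelevant variables and $R(\Sigma):=V-I(\Sigma)$ the set of relevant (essential) variables. *)

From Stdlib Require Import List.

Inductive form (V : Type) : Type :=
  | FVar : V -> form V
  | FTop : form V
  | FBot : form V
  | FNeg : form V -> form V
  | FAnd : form V -> form V -> form V
  | FOr  : form V -> form V -> form V
  | FImp : form V -> form V -> form V.
Arguments FVar {V} _.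
Arguments FTop {V}.
Arguments FBot {V}.
Arguments FNeg {V} _.
Arguments FAnd {V} _ _.
Arguments FOr {V} _ _.
Arguments FImp {V} _ _.

Definition model (V : Type) := V -> bool.

Definition mset (V : Type) := model V -> Prop.

Fixpoint sat {V : Type} (m : model V) (f : form V) : Prop :=
  match f with
  | FVar p => m p = true
  | FTop => True
  | FBot => False
  | FNeg g => ~ sat m g
  | FAnd g h => sat m g /\ sat m h
  | FOr g h => sat m g \/ sat m h
  | FImp g h => sat m g -> sat m h
  end.

Definition theory (V : Type) := form V -> Prop.
Definition Mod {V : Type} (T : theory V) : mset V :=
  fun m => forall f, T f -> sat m f.

Definition definable {V : Type} (S : mset V) : Prop :=
  exists T : theory V, S = Mod T.

Definition msubset {V : Type} (A B : mset V) : Prop := forall m, A m -> B m.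

Definition irrelevant {V : Type} (S : mset V) (p : V) : Prop :=
  forall m m' : model V, S m ->
    m' p = negb (m p) -> (forall q, q <> p -> m' q = m q) -> S m'.

Definition Irr {V : Type} (S : mset V) : V -> Prop := fun p => irrelevant S p.
Definition Rel {V : Type} (S : mset V) : V -> Prop := fun p => ~ irrelevant S p.

Definition vsubset {V : Type} (A B : V -> Prop) : Prop := forall p, A p -> B p.

Definition mu_ok {V : Type} (mu : mset V -> mset V) : Prop :=
  forall S, definable S -> msubset (mu S) S.

Definition nm_entails {V : Type} (mu : mset V -> mset V) (T : theory V) (psi : form V) : Prop :=
  msubset (mu (Mod T)) (fun m => sat m psi).

Definition has_interpolation {V : Type} (mu : mset V -> mset V) : Prop :=
  forall S S' : mset V, definable S -> definable S' -> msubset (mu S) S' ->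
    exists S'' : mset V, definable S'' /\ msubset (mu S) S'' /\ msubset S'' S' /\
      vsubset (Rel S'') (fun p => Rel S p /\ Rel S' p).

Definition finite_type (V : Type) : Prop := exists s : list V, forall v : V, In v s.

(* An interpolant for mu(S) ⊆ S' is the set of models of all consequences of mu(S) written in
   the variables K := R(S) ∩ R(S').  It contains mu(S), and its relevant variables lie in K.
   It lies inside S' = M(T'): given a model m of the interpolant and g in T', the finitely many
   variables of g that lie in K can be matched by some m0 in mu(S); the remaining variables of g
   that are relevant for S' are, by I(S) ⊆ I(mu(S)), irrelevant for mu(S), and the others are
   irrelevant for S', so m0 can be moved into agreement with m on all of g inside S'.
   Conversely, interpolating mu(S) ⊆ mu(S) itself yields I(S) ⊆ I(mu(S)); this needs mu(S) to be
   definable, which is automatic when V is finite. *)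
From Stdlib Require Import List Bool Classical ClassicalEpsilon FunctionalExtensionality
  PropExtensionality.

Section Interpolation.

Context {V : Type}.

Fixpoint vars (f : form V) : list V :=
  match f with
  | FVar p => p :: nil
  | FTop | FBot => nil
  | FNeg g => vars g
  | FAnd g h | FOr g h | FImp g h => vars g ++ vars h
  end.

Lemma sat_vars_agree (f : form V) (m m' : model V) :
  (forall v, In v (vars f) -> m v = m' v) -> (sat m f <-> sat m' f).
Proof.
  revert m m'; induction f; simpl; intros m m' H.
  - rewrite H by auto; tauto.
  - tauto.
  - tauto.
  - rewrite (IHf m m' H); tauto.
  - rewrite (IHf1 m m'), (IHf2 m m'); [tauto| |]; intros; apply H, in_or_app; auto.
  - rewrite (IHf1 m m'), (IHf2 m m'); [tauto| |]; intros; apply H, in_or_app; auto.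
  - rewrite (IHf1 m m'), (IHf2 m m'); [tauto| |]; intros; apply H, in_or_app; auto.
Qed.

Definition literals (m : model V) (l : list V) : form V :=
  fold_right (fun v acc => FAnd (if m v then FVar v else FNeg (FVar v)) acc) FTop l.

Lemma sat_literals (m m' : model V) (l : list V) :
  sat m' (literals m l) <-> forall v, In v l -> m' v = m v.
Proof.
  induction l as [|a l IH]; simpl.
  - split; auto; intros _ v [].
  - rewrite IH; split.
    + intros [Ha Hl] v [<-|Hv]; auto.
      destruct (m a); simpl in Ha; destruct (m' a); auto; exfalso; auto.
    + intros H; split; auto.
      destruct (m a) eqn:E; simpl; rewrite H by auto; rewrite ?E; auto; discriminate.
Qed.

Lemma vars_literals (m : model V) (l : list V) v : In v (vars (literals m l)) -> In v l.
Proof.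
  induction l as [|a l IH]; simpl; auto.
  intros H; apply in_app_or in H; destruct H as [H|H]; auto.
  destruct (m a); simpl in H; destruct H as [H|[]]; auto.
Qed.

Definition patch (P : V -> Prop) (m m0 : model V) : model V :=
  fun q => if excluded_middle_informative (P q) then m q else m0 q.

Lemma irrelevant_update (S : mset V) (l : list V) (m m' : model V) :
  S m -> (forall q, m' q <> m q -> In q l /\ irrelevant S q) -> S m'.
Proof.
  revert m; induction l as [|a l IH]; intros m Hm Hdiff.
  - replace m' with m; auto.
    apply functional_extensionality; intros q.
    destruct (bool_dec (m' q) (m q)) as [E|E]; auto.
    destruct (Hdiff q E) as [[] _].
  - set (m1 := patch (fun q => q = a) m' m).
    assert (Hm1 : S m1).
    { destruct (bool_dec (m' a) (m a)) as [E|E].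
      - replace m1 with m; auto.
        apply functional_extensionality; intros q; unfold m1, patch.
        destruct (excluded_middle_informative (q = a)); subst; auto.
      - apply (proj2 (Hdiff a E) m); auto; unfold m1, patch.
        + destruct (excluded_middle_informative (a = a)); [|tauto].
          destruct (m' a), (m a); simpl; congruence.
        + intros q Hq; destruct (excluded_middle_informative (q = a)); tauto. }
    apply (IH m1); auto; intros q Hq; unfold m1, patch in Hq.
    destruct (excluded_middle_informative (q = a)) as [->|Hqa]; [tauto|].
    destruct (Hdiff q Hq) as [[<-|Hl] Hi]; tauto.
Qed.

Lemma Mod_irrelevant_outside (T : theory V) (K : V -> Prop) p :
  (forall f, T f -> forall v, In v (vars f) -> K v) -> ~ K p -> irrelevant (Mod T) p.
Proof.
  intros HT Hp m m' Hm _ Hother f Hf.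
  apply (sat_vars_agree f m m'); auto.
  intros v Hv; symmetry; apply Hother; intros ->; exact (Hp (HT f Hf p Hv)).
Qed.

Variable K : V -> Prop.

Definition consequences_over (A : mset V) : theory V :=
  fun f => (forall v, In v (vars f) -> K v) /\ forall m, A m -> sat m f.

Lemma consequences_over_agree (A : mset V) (m : model V) (l : list V) :
  Mod (consequences_over A) m -> (forall v, In v l -> K v) ->
  exists m0, A m0 /\ forall v, In v l -> m0 v = m v.
Proof.
  intros Hm Hl; apply NNPP; intros Hnone.
  apply (Hm (FNeg (literals m l))).
  - split.
    + intros v Hv; apply Hl, (vars_literals m l v Hv).
    + intros m0 Hm0 Hsat; apply Hnone; exists m0; split; auto.
      apply sat_literals; exact Hsat.
  - apply sat_literals; auto.
Qed.

Lemma consequences_over_sub (A B : mset V) :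
  definable B -> msubset A B ->
  (forall q, Rel B q -> ~ K q -> irrelevant A q) ->
  msubset (Mod (consequences_over A)) B.
Proof.
  intros [T ->] HAB Hextra m Hm g Hg.
  set (inK := fun q => if excluded_middle_informative (K q) then true else false).
  destruct (consequences_over_agree A m (filter inK (vars g))) as [m0 [Hm0 Hagree]];
    auto.
  { intros v Hv; apply filter_In in Hv; unfold inK in Hv.
    destruct (excluded_middle_informative (K v)); [auto|now destruct Hv]. }
  set (m1 := patch (fun q => In q (vars g) /\ Rel (Mod T) q) m m0).
  assert (Hm1 : A m1).
  { apply (irrelevant_update A (vars g) m0); auto; intros q Hq; unfold m1, patch in Hq.
    destruct (excluded_middle_informative (In q (vars g) /\ Rel (Mod T) q))
      as [[Hin HR]|]; [|tauto].
    split; auto; apply Hextra; auto; intros HKq.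
    apply Hq, eq_sym, Hagree, filter_In; split; auto; unfold inK.
    destruct (excluded_middle_informative (K q)); tauto. }
  set (m2 := patch (fun q => In q (vars g)) m m1).
  assert (Hm2 : Mod T m2).
  { apply (irrelevant_update _ (vars g) m1); auto; intros q Hq; unfold m2, m1, patch in Hq.
    destruct (excluded_middle_informative (In q (vars g))) as [Hin|]; [|tauto].
    split; auto; apply NNPP; intros HR.
    destruct (excluded_middle_informative (In q (vars g) /\ Rel (Mod T) q)); tauto. }
  apply (sat_vars_agree g m2 m); auto.
  intros v Hv; unfold m2, patch; destruct (excluded_middle_informative (In v (vars g))); tauto.
Qed.

End Interpolation.

Lemma interpolation_of_irrelevance {V : Type} (mu : mset V -> mset V) :
  (forall S, definable S -> vsubset (Irr S) (Irr (mu S))) -> has_interpolation mu.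
Proof.
  intros Hirr S S' dS dS' Hsub.
  set (K := fun p => Rel S p /\ Rel S' p).
  exists (Mod (consequences_over K (mu S))); split; [|split; [|split]].
  - exists (consequences_over K (mu S)); reflexivity.
  - intros m Hm f [_ Hf]; auto.
  - apply consequences_over_sub; auto.
    intros q HR HK; apply (Hirr S dS q), NNPP; intros HS; exact (HK (conj HS HR)).
  - intros p Hp; apply NNPP; intros HK; apply Hp.
    apply (Mod_irrelevant_outside _ K); auto; intros f [Hf _]; exact Hf.
Qed.

Lemma irrelevance_of_interpolation {V : Type} (mu : mset V -> mset V) (S : mset V) :
  has_interpolation mu -> definable S -> definable (mu S) -> vsubset (Irr S) (Irr (mu S)).
Proof.
  intros HI dS dmS p Hp.
  destruct (HI S (mu S) dS dmS (fun m h => h)) as [S'' [_ [Hsub [HS'' HR]]]].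
  assert (Hi : irrelevant S'' p) by (apply NNPP; intros Hn; exact (proj1 (HR p Hn) Hp)).
  intros m m' Hm Hflip Hother; apply HS'', (Hi m); auto.
Qed.

Lemma finite_definable {V : Type} (S : mset V) : finite_type V -> definable S.
Proof.
  intros [s Hs].
  exists (fun f => exists m, ~ S m /\ f = FNeg (literals m s)).
  apply functional_extensionality; intros m'; apply propositional_extensionality; split.
  - intros Hm f [m [Hn ->]] Hsat.
    pose proof (proj1 (sat_literals m m' s) Hsat) as Hagree.
    replace m' with m in Hm by (symmetry; apply functional_extensionality; auto).
    contradiction.
  - intros Hm; apply NNPP; intros Hn.
    apply (Hm (FNeg (literals m' s))); [exists m'; auto|]; apply sat_literals; auto.
Qed.

Theorem fact4p2 :
  (forall (V : Type) (mu : mset V -> mset V),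
      finite_type V -> mu_ok mu ->
      (has_interpolation mu <-> forall S : mset V, vsubset (Irr S) (Irr (mu S))))
  /\
  (forall (V : Type) (mu : mset V -> mset V),
      ~ finite_type V -> mu_ok mu ->
      (forall S : mset V, definable S -> definable (mu S)) ->
      (has_interpolation mu <->
         forall S : mset V, definable S -> vsubset (Irr S) (Irr (mu S)))).
Proof.
  split.
  - intros V mu Hfin _; split.
    + intros HI S; apply irrelevance_of_interpolation; auto using finite_definable.
    + intros Hirr; apply interpolation_of_irrelevance; auto.
  - intros V mu _ _ Hdef; split.
    + intros HI S dS; apply irrelevance_of_interpolation; auto.
    + apply interpolation_of_irrelevance.
Qed.
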